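(* For all integers $m,n\ge1$, $$T_{2m,n}(q)=\sum_{r=0}^{m-1}(-1)^r\binom{2m}{r}\frac{(1-q^{n(m-r)})(1-q^{(n+1)(m-r)})q^{rn}}{(1-q)^{2m}(1+q^{m-r})}.$$
   Context: $q$ is an indeterminate. For integers $m,n\ge1$, $$T_{m,n}(q)=\sum_{k=1}^{n}(-1)^{n-k}\left(\frac{1-q^k}{1-q}\right)^{m}q^{\frac m2(n-k)}.$$ *)

From HB Require Import structures.
From mathcomp Require Import all_boot all_order all_algebra.
Set Implicit Arguments. Unset Strict Implicit. Unset Printing Implicit Defensive.
Import Order.TTheory GRing.Theory Num.Theory.
Local Open Scope ring_scope.

(* T_{m,n}(q) = sum_{k=1}^n (-1)^{n-k} ((1-q^k)/(1-q))^m q^{(m/2)(n-k)}.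
   Because of the half-integer exponent q^{m/2}, we parametrize by a
   square root s of q (q := s^2), so that q^{(m/2)(n-k)} = s^{m(n-k)}. *)
Definition Tmn (F : fieldType) (s : F) (m n : nat) : F :=
  let q := s ^+ 2 in
  \sum_(1 <= k < n.+1)
     (-1) ^+ (n - k) * ((1 - q ^+ k) / (1 - q)) ^+ m * s ^+ (m * (n - k)).

From HB Require Import structures.
From mathcomp Require Import all_boot all_order all_algebra.
From mathcomp Require Import ring zify.
Import Order.TTheory GRing.Theory Num.Theory.
Local Open Scope ring_scope.
Set Implicit Arguments.
Unset Strict Implicit.
Set Warnings "-notation-overridden -ambiguous-paths".

(* Peeling off the term [k = n + 1] gives the recursion
   [T_{M,n+1} = ((1 - q^(n+1)) / (1 - q))^M - q^(M/2) T_{M,n}], [T_{M,0} = 0].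
   So it suffices that the numerator [N_n] of the right-hand side satisfies
   [N_0 = 0] and [N_{n+1} + q^m N_n = (1 - q^(n+1))^(2m)].  Term by term, with
   [y = q^(n+1)], the left side collapses to [c_r y^r (1 - y^(m-r))^2], where
   [c_r = (-1)^r C(2m, r)]; summing over [r < m] gives [(1 - y)^(2m)] by the
   symmetry [c_(2m-r) = c_r] and [sum_r c_r = 0]. *)

Definition signed_binom (R : nzRingType) (N r : nat) : R := (-1) ^+ r * ('C(N, r))%:R.

Section SignedBinomial.

Variable R : comNzRingType.
Implicit Type y : R.
Local Notation sb := (@signed_binom R).

Lemma expr1B_signed_binom y N :
  (1 - y) ^+ N = \sum_(0 <= r < N.+1) sb N r * y ^+ r.
Proof.
rewrite exprBn big_mkord; apply: eq_bigr => r _.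
by rewrite expr1n mulr1 /signed_binom -mulr_natl; ring.
Qed.

Lemma signed_binom_sym m r : (r <= 2 * m)%N -> sb (2 * m) (2 * m - r) = sb (2 * m) r.
Proof.
move=> le_r_2m; rewrite /signed_binom bin_sub // -signr_odd -(signr_odd _ r).
by rewrite oddB // oddM /=; case: (odd r).
Qed.

Lemma expr1B_even_split y m :
  (1 - y) ^+ (2 * m) =
  \sum_(0 <= r < m) sb (2 * m) r * y ^+ r + sb (2 * m) m * y ^+ m
  + \sum_(0 <= r < m) sb (2 * m) r * y ^+ (2 * m - r).
Proof.
rewrite expr1B_signed_binom (@big_cat_nat _ _ _ m) //=; last by lia.
rewrite (@big_cat_nat _ _ _ m.+1 m) //=; last by lia.
rewrite big_nat1 addrA; congr (_ + _).
rewrite -{1}(add0n m.+1) big_addn.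
have -> : ((2 * m).+1 - m.+1 = m)%N by lia.
rewrite big_nat_rev /=; apply: eq_big_nat => r /andP [_ lt_r_m].
have -> : (0 + m - r.+1 + m.+1 = 2 * m - r)%N by lia.
by rewrite signed_binom_sym //; lia.
Qed.

(* The split expansion at [y = 1], where the two outer sums coincide. *)
Lemma sum_signed_binom_half m : (0 < m)%N ->
  (\sum_(0 <= r < m) sb (2 * m) r) *+ 2 = - sb (2 * m) m.
Proof.
move=> m_gt0; have := expr1B_even_split 1 m.
rewrite subrr expr0n muln_eq0 /= (gtn_eqF m_gt0) mulr0n expr1n mulr1.
under eq_bigr do rewrite expr1n mulr1.
under [X in _ = _ + _ + X]eq_bigr do rewrite expr1n mulr1.
set S := \sum_(0 <= r < m) _; move=> h.
rewrite -[LHS]subr0 h; ring.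
Qed.

(* Expanding [(1 - y^(m-r))^2 y^r = y^r - 2 y^m + y^(2m-r)], the outer terms
   rebuild [(1 - y)^(2m)] minus its middle term, which the middle terms supply. *)
Lemma sum_signed_binom_sqr y m : (0 < m)%N ->
  \sum_(0 <= r < m) sb (2 * m) r * y ^+ r * (1 - y ^+ (m - r)) ^+ 2
  = (1 - y) ^+ (2 * m).
Proof.
move=> m_gt0.
have expand r : (r < m)%N -> sb (2 * m) r * y ^+ r * (1 - y ^+ (m - r)) ^+ 2
    = sb (2 * m) r * y ^+ r - y ^+ m *+ 2 * sb (2 * m) r
      + sb (2 * m) r * y ^+ (2 * m - r).
  move=> lt_r_m.
  have -> : (2 * m - r = r + (m - r) + (m - r))%N by lia.
  have -> : y ^+ m = y ^+ r * y ^+ (m - r) by rewrite -exprD; congr (_ ^+ _); lia.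
  rewrite !exprD; ring.
rewrite (eq_big_nat _ _ (fun r hr => expand r (andP hr).2)) !big_split /=.
rewrite sumrN -mulr_sumr mulrnAl -mulrnAr sum_signed_binom_half //.
rewrite expr1B_even_split; ring.
Qed.

End SignedBinomial.

Lemma Tmn0 (F : fieldType) (s : F) M : Tmn s M 0 = 0.
Proof. by rewrite /Tmn big_geq. Qed.

Lemma TmnS (F : fieldType) (s : F) M n :
  Tmn s M n.+1 = ((1 - (s ^+ 2) ^+ n.+1) / (1 - s ^+ 2)) ^+ M - s ^+ M * Tmn s M n.
Proof.
rewrite /Tmn big_nat_recr //= subnn expr0 mul1r muln0 expr0 mulr1 addrC.
congr (_ + _); rewrite mulr_sumr -sumrN; apply: eq_big_nat => k /andP[_ lt_k_n].
have -> : (n.+1 - k = (n - k).+1)%N by lia.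
by rewrite exprS mulnS exprD; ring.
Qed.

Definition Tmn_even_num (F : fieldType) (q : F) (m n : nat) : F :=
  \sum_(0 <= r < m) signed_binom F (2 * m) r *
     ((1 - q ^+ (n * (m - r))) * (1 - q ^+ (n.+1 * (m - r))) * q ^+ (r * n))
     / (1 + q ^+ (m - r)).

Lemma Tmn_even_num0 (F : fieldType) (q : F) m : Tmn_even_num q m 0 = 0.
Proof.
rewrite /Tmn_even_num big1_seq // => r _.
by rewrite mul0n expr0 subrr !mul0r mulr0 mul0r.
Qed.

Lemma Tmn_even_num_term (F : fieldType) (q : F) (n r k : nat) : 1 + q ^+ k != 0 ->
  (1 - q ^+ (n.+1 * k)) * (1 - q ^+ (n.+2 * k)) * q ^+ (r * n.+1) / (1 + q ^+ k)
  + q ^+ (r + k) * ((1 - q ^+ (n * k)) * (1 - q ^+ (n.+1 * k)) * q ^+ (r * n)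
                    / (1 + q ^+ k))
  = (q ^+ n.+1) ^+ r * (1 - (q ^+ n.+1) ^+ k) ^+ 2.
Proof.
move=> qk_neq; rewrite -!exprM.
have -> : (n.+1 * r = r * n + r)%N by lia.
have -> : (r * n.+1 = r * n + r)%N by lia.
have -> : (n.+1 * k = k * n + k)%N by lia.
have -> : (n.+2 * k = k * n + k + k)%N by lia.
have -> : (n * k = k * n)%N by lia.
by rewrite !exprD; field.
Qed.

Lemma Tmn_even_numS (F : fieldType) (q : F) m n : (0 < m)%N ->
  (forall r, (r < m)%N -> 1 + q ^+ (m - r) != 0) ->
  Tmn_even_num q m n.+1 + q ^+ m * Tmn_even_num q m n = (1 - q ^+ n.+1) ^+ (2 * m).
Proof.
move=> m_gt0 qmr_neq; rewrite /Tmn_even_num mulr_sumr -big_split /=.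
rewrite -(sum_signed_binom_sqr _ m_gt0); apply: eq_big_nat => r /andP[_ lt_r_m].
have -> : q ^+ m = q ^+ (r + (m - r)) by rewrite subnKC // ltnW.
by rewrite -[RHS]mulrA -Tmn_even_num_term ?qmr_neq //; ring.
Qed.

Lemma Tmn_even_mulE (F : fieldType) (s : F) m n : (0 < m)%N ->
  (forall r, (r < m)%N -> 1 + (s ^+ 2) ^+ (m - r) != 0) -> s ^+ 2 != 1 ->
  Tmn s (2 * m) n * (1 - s ^+ 2) ^+ (2 * m) = Tmn_even_num (s ^+ 2) m n.
Proof.
move=> m_gt0 qmr_neq q_neq1.
have den_neq0 : 1 - s ^+ 2 != 0 by rewrite subr_eq0 eq_sym.
elim: n => [|n IHn]; first by rewrite Tmn0 mul0r Tmn_even_num0.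
rewrite TmnS mulrBl -mulrA IHn -exprMn divfK // -(Tmn_even_numS _ m_gt0 qmr_neq).
by rewrite exprM addrK.
Qed.

Theorem lemma2p2 (F : fieldType) (s : F) (m n : nat) :
  (1 <= m)%N -> (1 <= n)%N ->
  s ^+ 2 != 1 ->
  (forall r : nat, (r < m)%N -> 1 + (s ^+ 2) ^+ (m - r) != 0) ->
  Tmn s (2 * m) n =
  \sum_(0 <= r < m)
     (-1) ^+ r * ('C(2 * m, r))%:R *
     ((1 - (s ^+ 2) ^+ (n * (m - r))) * (1 - (s ^+ 2) ^+ (n.+1 * (m - r)))
        * (s ^+ 2) ^+ (r * n))
     / ((1 - s ^+ 2) ^+ (2 * m) * (1 + (s ^+ 2) ^+ (m - r))).
Proof.
move=> m_gt0 _ q_neq1 qmr_neq.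
have den_neq0 : (1 - s ^+ 2) ^+ (2 * m) != 0 by rewrite expf_neq0 // subr_eq0 eq_sym.
rewrite -[LHS](mulfK den_neq0) Tmn_even_mulE // /Tmn_even_num mulr_suml.
by apply: eq_bigr => r _; rewrite invfM /signed_binom; ring.
Qed.
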